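(* Let $T$ be a nonempty compact Hausdorff topological space and $\{f_t:\ t\in T\}$ a family of convex functions $f_t:X\to\mathbb{R}\cup\{+\infty\}$ (not necessarily lower semicontinuous) such that for each $z\in X$ the map $t\mapsto f_t(z)$ is upper semicontinuous on $T$. Let $f:=\sup_{t\in T}f_t$. Then \[ \operatorname{dom}f=\bigcap_{t\in T}\operatorname{dom}f_t, \] and for every $x\in\operatorname{dom}f$, \[ \mathbb{R}_+(\operatorname{dom}f-x)=\bigcap_{t\in T}\mathbb{R}_+(\operatorname{dom}f_t-x). \]
   Context: $X$ is a real separated locally convex space; $\operatorname{dom}g=\{x: g(x)<+\infty\}$; $\mathbb{R}_+A=\{\lambda a:\lambda\ge0, a\in A\}$. *)

From HB Require Import structures.
From mathcomp Require Import all_boot all_order all_algebra.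
From mathcomp Require Import all_classical all_reals all_analysis.
Set Implicit Arguments. Unset Strict Implicit. Unset Printing Implicit Defensive.
Import Order.TTheory GRing.Theory Num.Theory.
Local Open Scope classical_set_scope.
Local Open Scope ring_scope.

Definition convex_ext (R : realType) (X : lmodType R) (g : X -> \bar R) : Prop :=
  (forall x, g x != -oo%E) /\
  forall (x y : X) (l : R), 0 < l < 1 ->
    (g ((l *: x + (1 - l) *: y)%R) <= l%:E * g x + (1 - l)%:E * g y)%E.

Definition usc_ext (R : realType) (T : topologicalType) (h : T -> \bar R) : Prop :=
  forall c : R, open [set t | (h t < c%:E)%E].

Definition edom (R : realType) (X : Type) (g : X -> \bar R) : set X :=
  [set x | (g x < +oo)%E].

Definition cone_at (R : realType) (X : lmodType R) (A : set X) (x : X) : set X :=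
  [set y | exists l : R, 0 <= l /\ exists2 a, A a & y = l *: (a - x)].

Definition sup_fam (R : realType) (T X : Type) (F : T -> X -> \bar R) : X -> \bar R :=
  fun z => ereal_sup [set F t z | t in [set: T]].

From HB Require Import structures.
From mathcomp Require Import all_boot all_order all_algebra.
From mathcomp Require Import all_classical all_reals all_analysis.
Import Order.TTheory GRing.Theory Num.Theory.
Local Open Scope classical_set_scope.
Local Open Scope ring_scope.

(* The whole argument rests on one compactness principle: if an increasing
   sequence of subsets P_n of a compact space T eventually contains a
   neighbourhood of every point, then a single P_N is all of T
   ([compact_monotone_cover]).
   - Domain: for z in every dom f_t, the open sets {t | f_t z < n} increase
     and cover T (upper semicontinuity), so some n bounds every f_t z and
     hence f z ([usc_compact_sup_finite]).
   - Cone: for y in every R_+(dom f_t - x), the sets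
     {t | f_t (x + y/(n+1)) < +oo} increase in n because dom f_t is convex
     and contains x ([convex_ext_dom_segment]); each contains a neighbourhood
     of any of its points by upper semicontinuity.  So some x + y/(n+1) lies
     in every dom f_t, hence in dom f by the domain part, and
     y = (n+1)(x + y/(n+1) - x). *)

Lemma ltey_real_bound {R : realType} {e : \bar R} :
  (e < +oo)%E -> exists c : R, (e < c%:E)%E.
Proof.
case: e => [r| |] // _; last by exists 0; rewrite ltNyr.
by exists (r + 1); rewrite lte_fin ltrDl.
Qed.

Section ConvexDomain.
Context {R : realType} {X : lmodType R} {g : X -> \bar R}.
Hypothesis g_convex : convex_ext g.

Lemma convex_ext_dom_combination (a b : X) (l : R) :
  edom g a -> edom g b -> 0 <= l <= 1 -> edom g (l *: a + (1 - l) *: b).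
Proof.
case: g_convex => gNy gconv; rewrite /edom/= => ga gb /andP[l0 l1].
have [->|ln0] := eqVneq l 0; first by rewrite scale0r add0r subr0 scale1r.
have [->|ln1] := eqVneq l 1; first by rewrite subrr scale0r addr0 scale1r.
have l01 : 0 < l < 1 by rewrite !lt_def ln0 l0 eq_sym ln1 l1.
apply: le_lt_trans (gconv a b l l01) _.
move: (gNy a) (gNy b) ga gb.
case: (g a) => [ra| |] //; case: (g b) => [rb| |] // _ _ _ _.
by rewrite -!EFinM -EFinD ltry.
Qed.

Lemma convex_ext_dom_segment (x w : X) (s s0 : R) :
  edom g x -> 0 < s0 -> edom g (x + s0 *: w) -> 0 <= s <= s0 ->
  edom g (x + s *: w).
Proof.
move=> gx s0_gt0 gs /andP[s_ge0 s_le].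
have <- : s / s0 *: (x + s0 *: w) + (1 - s / s0) *: x = x + s *: w.
  rewrite scalerDr scalerA mulfVK ?gt_eqF // scalerBl scale1r.
  by rewrite addrC addrA subrK.
apply: convex_ext_dom_combination => //; apply/andP; split.
  exact: divr_ge0 (ltW s0_gt0).
by rewrite ler_pdivrMr // mul1r.
Qed.

End ConvexDomain.

Section Compactness.
Context {R : realType} {T : topologicalType}.
Hypothesis T_compact : compact [set: T].

Lemma compact_monotone_cover (P : nat -> set T) :
  (forall n m, (n <= m)%N -> P n `<=` P m) ->
  (forall t : T, exists n, nbhs t (P n)) -> exists N, forall t, P N t.
Proof.
move=> Pmono Pnbhs.
have := (compact_near_coveringP _).1 T_compact nat \oo (fun n t => P n t).
case.
- move=> t _; have [n0 Pn0] := Pnbhs t.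
  exists (P n0, [set n | (n0 <= n)%N]); first by split => //; exists n0.
  by move=> [t' n] [/= Pt' le_n0n]; exact: Pmono le_n0n _ Pt'.
- by move=> N _ PN; exists N => t; exact: PN N (leqnn N) t I.
Qed.

Lemma usc_compact_sup_finite (h : T -> \bar R) :
  usc_ext h -> (forall t, (h t < +oo)%E) -> (ereal_sup (range h) < +oo)%E.
Proof.
move=> h_usc h_fin.
have [N hN] : exists N, forall t, (h t < N%:R%:E)%E.
  apply: compact_monotone_cover => [n m le_nm t /= |t].
    by move=> /lt_le_trans; apply; rewrite lee_fin ler_nat.
  have [c hc] := ltey_real_bound (h_fin t).
  have below_c : open_nbhs t [set t' | (h t' < c%:E)%E] by split; [exact: h_usc|].
  exists (Num.Def.truncn c).+1; apply: filterS (open_nbhs_nbhs below_c) => t' /=.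
  by move/lt_trans; apply; rewrite lte_fin truncnS_gt.
apply: le_lt_trans (ltry N%:R).
by apply: ge_ereal_sup => _ [t _ <-]; exact: ltW.
Qed.

End Compactness.

Lemma cone_at_subset {R : realType} {X : lmodType R} (A B : set X) (x : X) :
  A `<=` B -> cone_at A x `<=` cone_at B x.
Proof.
by move=> AB y [l [l0 [a Aa ->]]]; exists l; split => //; exists a; [exact: AB|].
Qed.

Lemma cone_at_dom_ray {R : realType} {X : lmodType R} {g : X -> \bar R}
    {x y : X} :
  convex_ext g -> edom g x -> cone_at (edom g) x y ->
  exists n : nat, edom g (x + (n.+1%:R)^-1 *: y).
Proof.
move=> g_convex gx [l [l0 [a ga ->]]].
exists (Num.Def.truncn l); rewrite scalerA.
apply: (@convex_ext_dom_segment _ _ _ g_convex x (a - x) _ 1) => //.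
  by rewrite scale1r addrC subrK.
rewrite mulr_ge0 ?invr_ge0 //= mulrC ler_pdivrMr ?ltr0Sn // mul1r.
exact: ltW (truncnS_gt l).
Qed.

Section SupremumOfConvexFamily.
Variables (R : realType) (X : lmodType R) (T : topologicalType).
Variable F : T -> X -> \bar R.
Hypothesis T_compact : compact [set: T].
Hypothesis F_convex : forall t, convex_ext (F t).
Hypothesis F_usc : forall z, usc_ext (fun t => F t z).

Let f := sup_fam F.

Lemma edom_sup_fam_sub t : edom f `<=` edom (F t).
Proof. by move=> z; apply: le_lt_trans; apply: ereal_sup_ubound; exists t. Qed.

Lemma edom_sup_fam : edom f = \bigcap_(t in [set: T]) edom (F t).
Proof.
apply/seteqP; split => z; first by move=> fz t _; exact: edom_sup_fam_sub.
by move=> Fz; apply: usc_compact_sup_finite => // t; exact: Fz t I.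
Qed.

Lemma cone_at_edom_sup_fam x : edom f x ->
  cone_at (edom f) x = \bigcap_(t in [set: T]) cone_at (edom (F t)) x.
Proof.
move=> fx; apply/seteqP; split => y.
  by move=> fy t _; exact: cone_at_subset (@edom_sup_fam_sub t) _ fy.
move=> Fy.
pose P n := [set t | edom (F t) (x + (n.+1%:R)^-1 *: y)].
have P_mono n m : (n <= m)%N -> P n `<=` P m.
  move=> le_nm t Fn; apply: (convex_ext_dom_segment (F_convex t) _ _ _ _ _ _ Fn).
  - exact: edom_sup_fam_sub fx.
  - by rewrite invr_gt0 ltr0Sn.
  - by rewrite invr_ge0 ler0n lef_pV2 ?posrE ?ltr0Sn // ler_nat ltnS.
have P_nbhs (t : T) : exists n, nbhs t (P n).
  have [n0 Fn0] := cone_at_dom_ray (F_convex t) (@edom_sup_fam_sub t x fx) (Fy t I).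
  have [c Fc] := ltey_real_bound Fn0.
  have below_c : open_nbhs t [set t' | (F t' (x + (n0.+1%:R)^-1 *: y) < c%:E)%E].
    by split; [exact: F_usc|].
  exists n0; apply: filterS (open_nbhs_nbhs below_c) => t' /= /lt_trans; apply.
  exact: ltry.
have [N PN] := compact_monotone_cover T_compact _ P_mono P_nbhs.
exists N.+1%:R; split; first exact: ler0n.
exists (x + (N.+1%:R)^-1 *: y).
  by rewrite edom_sup_fam => t _; exact: PN.
by rewrite (addrC x) addrK scalerA mulfV ?scale1r // pnatr_eq0.
Qed.

End SupremumOfConvexFamily.

Theorem lemma5 (R : realType) (X : tvsType R) (T : topologicalType)
  (F : T -> X -> \bar R) :
  hausdorff_space X ->
  [set: T] !=set0 -> compact [set: T] -> hausdorff_space T ->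
  (forall t, convex_ext (F t)) ->
  (forall z : X, usc_ext (fun t => F t z)) ->
  edom (sup_fam F) = \bigcap_(t in [set: T]) edom (F t) /\
  (forall x, edom (sup_fam F) x ->
     cone_at (edom (sup_fam F)) x = \bigcap_(t in [set: T]) cone_at (edom (F t)) x).
Proof.
move=> _ _ T_compact _ F_convex F_usc.
by split; [exact: edom_sup_fam | move=> x; exact: cone_at_edom_sup_fam].
Qed.
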